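(* Fix $\delta\in(0,1)$. Suppose that for each $t\ge2$ and $g\in[t-1]$, $T^{(t)}_g\in\{0,1\}$ is a measurable function of $(Y_1,\dots,Y_t)$, and that: (A) for all $t\ge 2$ and $g\in[t-1]$, $\mathbb P_\infty(T^{(t)}_g=1)\le \delta/(3t^2\log t)$; (B) there are a number $\rho=\rho(P_1,P_2)\ge0$ and a function $r(t,\delta)>0$ non-decreasing in $t$ such that whenever $\tau<\infty$, $\tau<t\le 2\tau$ and $(t-\tau)\rho\ge r(t,\delta)$, we have $\mathbb P_\tau(T^{(t)}_g=1)\ge1-\delta$ for every integer $g$ with $(t-\tau)/2\le g\le t-\tau$. Let $\hat\tau=\inf\{t\in\mathbb N:t\ge2,\ \max_{g\in G^{(t)}}T^{(t)}_g=1\}$. Then $\mathbb P_\infty(\hat\tau<\infty)\le\delta$, and for every $\tau\in\mathbb N$ with $\tau\rho\ge r(2\tau,\delta)$, $$\mathbb P_\tau\Big\{\hat\tau\le\tau+\Big\lceil\frac{r(2\tau,\delta)}{\rho}\Big\rceil\Big\}\ge1-\delta.$$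
   Context: $\log$ is the natural logarithm, $[n]=\{1,\dots,n\}$, $\inf\emptyset=\infty$. Model: $(Y_i)_{i\in\mathbb N}$ are independent random vectors in $\mathbb R^p$; for $\tau\in\mathbb N\cup\{\infty\}$, under $\mathbb P_\tau$, $Y_i\sim P_1$ for $i\le\tau$ and $Y_i\sim P_2$ for $i>\tau$ (all $Y_i\sim P_1$ if $\tau=\infty$). Dynamic geometric grid: for $t\ge2$, $G^{(t)}=\{1\}\cup\bigcup_{j=1}^{\lfloor \log_2\{(t-1)/3\}\rfloor+1}\{g^{(t)}_{L,j}\}\cup\bigcup_{j=1}^{\lfloor\log_2(t-1)\rfloor-1}\{g^{(t)}_{R,j}\}$ with $g^{(t)}_{L,j}=2^j+\{(t-1)\bmod 2^{j-1}\}$, $g^{(t)}_{R,j}=g^{(t)}_{L,j}+2^{j-1}$ (empty unions if the upper index is $<1$; $a\bmod b=a-b\lfloor a/b\rfloor$). *)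

From HB Require Import structures.
From mathcomp Require Import all_boot all_order all_algebra.
From mathcomp Require Import all_classical all_reals all_analysis.
Set Implicit Arguments. Unset Strict Implicit. Unset Printing Implicit Defensive.
Import Order.TTheory GRing.Theory Num.Theory.
Local Open Scope classical_set_scope.
Local Open Scope ring_scope.

(* number of left grid points: floor(log2((t-1)/3)) + 1 when (t-1)/3 >= 1,
   and 0 (empty union) otherwise.  For n >= 3, floor(log2(n/3)) is the
   largest k with 2^k <= n/3, i.e. with 2^k <= n %/ 3, i.e. trunc_log 2 (n %/ 3). *)
Definition nL (t : nat) : nat :=
  if (3 <= t.-1)%N then (trunc_log 2 (t.-1 %/ 3)).+1 else 0%N.

Definition nR (t : nat) : nat := (trunc_log 2 t.-1).-1.

Definition gL (t j : nat) : nat := (2 ^ j + (t.-1 %% 2 ^ j.-1))%N.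
Definition gR (t j : nat) : nat := (gL t j + 2 ^ j.-1)%N.

Definition grid (t : nat) : seq nat :=
  1%N :: [seq gL t j | j <- iota 1 (nL t)] ++ [seq gR t j | j <- iota 1 (nR t)].

Section model.
Context {R : realType} {d dX : measure_display}
  {Omega : measurableType d} {X : measurableType dX}.

Definition mutually_independent (P : probability Omega R) (I : set nat)
    (Y : nat -> Omega -> X) : Prop :=
  forall (S : seq nat) (B : nat -> set X),
    uniq S -> [set` S] `<=` I -> (forall i, i \in S -> measurable (B i)) ->
    P (\bigcap_(i in [set` S]) (Y i @^-1` B i)) =
      (\prod_(i <- S) P (Y i @^-1` B i))%E.

(* Under P_tau: the Y_i (i >= 1) are independent, measurable, Y_i ~ P1 for
   i <= tau and Y_i ~ P2 for i > tau; tau = None encodes tau = infinity. *)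
Definition changepoint_model (P1 P2 : probability X R) (Y : nat -> Omega -> X)
    (P : probability Omega R) (tau : option nat) : Prop :=
  [/\ forall i, (0 < i)%N -> measurable_fun setT (Y i),
      mutually_independent P [set i | (0 < i)%N] Y &
      forall i, (0 < i)%N -> forall B, measurable B ->
        P (Y i @^-1` B) =
          (if tau is Some tau' then (if (i <= tau')%N then P1 B else P2 B)
           else P1 B)].

Definition obs (Y : nat -> Omega -> X) (t : nat) (w : Omega) : t.-tuple X :=
  [tuple Y i.+1 w | i < t].

Definition Tstat (f : forall t : nat, nat -> t.-tuple X -> bool)
    (Y : nat -> Omega -> X) (t g : nat) (w : Omega) : bool :=
  f t g (obs Y t w).

End model.

Definition tauhat {R : realType} {Omega : Type}
    (T : nat -> nat -> Omega -> bool) (w : Omega) : \bar R :=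
  ereal_inf [set (t%:R)%:E | t in
     [set t : nat | (2 <= t)%N /\ (\max_(g <- grid t) (T t g w : nat))%N = 1%N]].

(* False alarms: at time t at most |G^(t)| <= log_2 (t^2) <= 4 log t tests are run,
   each of level delta / (3 t^2 log t), so by the union bound time t raises an alarm with
   probability at most delta * 4 / (3 t^2), and these budgets sum to at most 8 delta / 9.
   Detection: with m = ceil (r(2 tau, delta) / rho) <= tau, the dyadic grid G^(tau + m)
   contains some g with m/2 <= g <= m, and (B) at the single pair (tau + m, g), which
   applies because r(tau + m, delta) <= r(2 tau, delta) <= m rho, already forces
   tauhat <= tau + m with probability at least 1 - delta. *)

From HB Require Import structures.
From mathcomp Require Import all_boot all_order all_algebra.
From mathcomp Require Import all_classical all_reals all_analysis.
From mathcomp Require Import zify ring lra.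
Set Implicit Arguments.
Unset Strict Implicit.
Unset Printing Implicit Defensive.
Import Order.TTheory GRing.Theory Num.Theory.
Local Open Scope classical_set_scope.
Local Open Scope ring_scope.

Lemma expn2_pred j : (0 < j)%N -> (2 ^ j = 2 * 2 ^ j.-1)%N.
Proof. by move=> j0; rewrite -expnS prednK. Qed.

Lemma mem_grid_gL t j : (0 < j)%N -> (3 * 2 ^ j.-1 <= t.-1)%N -> gL t j \in grid t.
Proof.
move=> j0 hj; rewrite /grid inE mem_cat map_f ?orbT // mem_iota /nL.
have t3 : (3 <= t.-1)%N by have := expn_gt0 2 j.-1; lia.
rewrite t3; suff : (j.-1 <= trunc_log 2 (t.-1 %/ 3))%N by lia.
by apply: trunc_log_max => //; rewrite leq_divRL // mulnC.
Qed.

Lemma mem_grid_gR t j : (0 < j)%N -> (2 ^ j.+1 <= t.-1)%N -> gR t j \in grid t.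
Proof.
move=> j0 hj; rewrite /grid inE mem_cat (map_f (gR t)) ?orbT // mem_iota /nR.
suff : (j.+1 <= trunc_log 2 t.-1)%N by lia.
by apply: trunc_log_max.
Qed.

Lemma mem_grid_bounds t g : (2 <= t)%N -> g \in grid t -> (1 <= g <= t.-1)%N.
Proof.
move=> t2; rewrite /grid inE mem_cat => /orP[/eqP->|/orP[]]; first lia.
- case/mapP => j; rewrite mem_iota /nL => hj ->.
  case: ifP hj => t3 hj; last lia.
  have hk : (2 ^ j.-1 <= t.-1 %/ 3)%N.
    apply: leq_trans (trunc_logP (p:=2) isT _); last lia.
    by rewrite leq_pexp2l //; lia.
  rewrite leq_divRL // in hk.
  have := ltn_pmod t.-1 (expn_gt0 2 j.-1); rewrite /gL (@expn2_pred j); lia.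
- case/mapP => j; rewrite mem_iota /nR => hj ->.
  have hk : (2 ^ j.+1 <= t.-1)%N.
    apply: leq_trans (trunc_logP (p:=2) isT _); last lia.
    by rewrite leq_pexp2l //; lia.
  have := ltn_pmod t.-1 (expn_gt0 2 j.-1).
  rewrite /gR /gL expnS (@expn2_pred j) in hk *; lia.
Qed.

Lemma grid_half_interval t m : (0 < m)%N -> (2 * m <= t)%N ->
  exists2 g, g \in grid t & (m <= 2 * g)%N && (g <= m)%N.
Proof.
move=> m0 mt; case: (leqP m 1) => m1.
  by exists 1%N; [rewrite inE eqxx | lia].
set j := trunc_log 2 m.
have j1 : (0 < j)%N by apply: trunc_log_max => //; lia.
have jm : (2 ^ j <= m < 2 * 2 ^ j)%N by rewrite -expnS trunc_logP ?trunc_log_ltn //; lia.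
have ej : (2 ^ j = 2 * 2 ^ j.-1)%N := expn2_pred j1.
have := ltn_pmod t.-1 (expn_gt0 2 j.-1).
case: (leqP (gL t j) m) => hL hmod.
  exists (gL t j); last by move: hL; rewrite /gL; lia.
  by apply: mem_grid_gL => //; lia.
(* [gL t j > m >= 2^j] forces a nonzero residue mod [2^(j-1)], hence [j >= 2];
   the right point one level down then lies in [m/2, m]. *)
have j2 : (1 < j)%N.
  by case: (ltngtP j 1) j1 hL => // ->; rewrite /gL /= expn0 modn1 expn1; lia.
have ej' : (2 ^ j.-1 = 2 * 2 ^ j.-2)%N by apply: expn2_pred; lia.
exists (gR t j.-1).
  by apply: mem_grid_gR; rewrite ?prednK //; lia.
have := ltn_pmod t.-1 (expn_gt0 2 j.-2).
by move: hL; rewrite /gR /gL; lia.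
Qed.

Lemma exp2_size_grid t : (2 <= t)%N -> (2 ^ size (grid t) <= t ^ 2)%N.
Proof.
move=> t2; rewrite /grid /= size_cat !size_map !size_iota -addnS expnD -mulnn.
apply: leq_mul.
  rewrite /nL; case: ifP => t3; last by rewrite expn0; lia.
  by rewrite expnS; have := trunc_logP (p:=2) (n:=t.-1 %/ 3) isT ltac:(lia); lia.
rewrite /nR; have := trunc_logP (p:=2) (n:=t.-1) isT ltac:(lia).
by case: trunc_log => [|a] /=; rewrite ?expn1; lia.
Qed.

Section alarm_budget.
Variable R : realType.

Lemma ln2_ge_half : 1 / 2 <= ln (2 : R).
Proof.
have := expR_ge1Dx (- ln (2 : R)).
by rewrite expRN lnK ?posrE // -div1r; lra.
Qed.

Lemma size_grid_le_ln t : (2 <= t)%N -> (size (grid t))%:R <= 4 * ln (t%:R : R).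
Proof.
move=> t2; set s := size (grid t).
have tR : (2 : R) <= t%:R by rewrite (ler_nat R 2 t).
have : ln ((2 : R) ^+ s) <= ln ((t%:R : R) ^+ 2).
  rewrite ler_ln ?posrE ?exprn_gt0 //; last lra.
  by rewrite -2!natrX ler_nat exp2_size_grid.
rewrite !lnXn //; last lra.
rewrite -[ln 2 *+ _]mulr_natr -[ln _ *+ 2]mulr_natr => h.
have : 0 <= (ln 2 - 1 / 2) * s%:R :> R by apply: mulr_ge0 => //; have := ln2_ge_half; lra.
lra.
Qed.

Definition alarm_budget (t : nat) : R :=
  if (2 <= t)%N then 4 / (3 * t%:R ^+ 2) else 0.

Lemma grid_level_le_budget (delta : R) t : 0 <= delta -> (2 <= t)%N ->
  (size (grid t))%:R * (delta / (3 * t%:R ^+ 2 * ln t%:R)) <= delta * alarm_budget t.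
Proof.
move=> d0 t2; rewrite /alarm_budget t2.
have tR : (2 : R) <= t%:R by rewrite (ler_nat R 2 t).
have t0 : (0 : R) < t%:R by lra.
have lt0 : 0 < ln (t%:R : R) by apply: ln_gt0; lra.
rewrite mulrCA ler_wpM2l // ler_pdivrMr ?mulr_gt0 ?exprn_gt0 //.
suff -> : 4 / (3 * (t%:R : R) ^+ 2) * (3 * t%:R ^+ 2 * ln t%:R) = 4 * ln t%:R.
  exact: size_grid_le_ln.
by field; exact: lt0r_neq0.
Qed.

(* [4/(3 t^2) <= (8/3) (1/(2t-1) - 1/(2t+1))] telescopes, from [t = 2], to [8/9]. *)
Lemma sum_alarm_budget_telescope N :
  \sum_(t < N.+2) alarm_budget t <= 8 / 9 - 8 / (3 * (2 * N%:R + 3)).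
Proof.
elim: N => [|N IH].
  by rewrite !big_ord_recr big_ord0 /alarm_budget /= mulr0 !add0r; lra.
rewrite big_ord_recr /=.
have -> : alarm_budget N.+2 = 4 / (3 * (N%:R + 2) ^+ 2).
  by rewrite /alarm_budget /= -[N.+2]addn2 natrD.
rewrite -[N.+1%:R]natr1; set x : R := N%:R in IH *; have x0 : 0 <= x by [].
suff : 4 / (3 * (x + 2) ^+ 2) <= 8 / (3 * (2 * x + 3)) - 8 / (3 * (2 * (x + 1) + 3)).
  lra.
rewrite -subr_ge0.
have -> : 8 / (3 * (2 * x + 3)) - 8 / (3 * (2 * (x + 1) + 3)) - 4 / (3 * (x + 2) ^+ 2)
    = 4 / (3 * (2 * x + 3) * (2 * x + 5) * (x + 2) ^+ 2).
  by field; apply/and3P; split; apply: lt0r_neq0; lra.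
by apply: divr_ge0 => //; apply: mulr_ge0; [nra | exact: sqr_ge0].
Qed.

Lemma sum_alarm_budget_le N : \sum_(t < N) alarm_budget t <= 8 / 9.
Proof.
case: N => [|[|N]]; first by rewrite big_ord0; lra.
  by rewrite big_ord1 /alarm_budget /=; lra.
apply: le_trans (sum_alarm_budget_telescope N) _.
have : 0 <= 8 / (3 * (2 * N%:R + 3)) :> R by rewrite divr_ge0 // mulr_ge0 // addr_ge0.
lra.
Qed.

End alarm_budget.

Lemma bigmax_nat_bool (I : Type) (s : seq I) (b : I -> bool) :
  (\max_(i <- s) (b i : nat))%N = has b s.
Proof. by elim: s => [|x s IH]; rewrite ?big_nil ?big_cons //= IH; case: (b x); case: has. Qed.

Section finite_union_bound.
Context d (T : measurableType d) (R : realType) (I : eqType).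
Variable A : I -> T -> bool.

Lemma set_has_cons x s :
  [set w | has (A^~ w) (x :: s)] = [set w | A x w] `|` [set w | has (A^~ w) s].
Proof. by apply/seteqP; split => w /= /orP. Qed.

Lemma measurable_has s : (forall i, i \in s -> measurable [set w | A i w]) ->
  measurable [set w | has (A^~ w) s].
Proof.
elim: s => [|x s IH] mA.
  by rewrite [X in measurable X](_ : _ = set0) //; apply/seteqP; split.
rewrite set_has_cons; apply: measurableU; first by apply: mA; rewrite mem_head.
by apply: IH => i si; apply: mA; rewrite inE si orbT.
Qed.

Lemma measure_has_le (mu : {measure set T -> \bar R}) (c : R) s :
  (forall i, i \in s -> measurable [set w | A i w]) ->
  (forall i, i \in s -> (mu [set w | A i w] <= c%:E)%E) ->
  (mu [set w | has (A^~ w) s] <= (c *+ size s)%:E)%E.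
Proof.
elim: s => [|x s IH] mA hA.
  by rewrite [X in mu X](_ : _ = set0) ?measure0 //; apply/seteqP; split.
have mA' i : i \in s -> measurable [set w | A i w] by move=> si; apply: mA; rewrite inE si orbT.
rewrite set_has_cons /= mulrS EFinD.
have mx : measurable [set w | A x w] by apply: mA; rewrite mem_head.
apply: le_trans (measureU2 mu mx (measurable_has mA')) _.
apply: leeD; first by apply: hA; rewrite mem_head.
by apply: IH => // i si; apply: hA; rewrite inE si orbT.
Qed.

End finite_union_bound.

Section statistics.
Context {d dX : measure_display} {Omega : measurableType d} {X : measurableType dX}.
Variable Y : nat -> Omega -> X.
Hypothesis mY : forall i, (0 < i)%N -> measurable_fun setT (Y i).

Lemma measurable_obs t : measurable_fun setT (obs Y t).
Proof.
apply/measurable_fun_tnthP => i.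
rewrite (_ : _ \o _ = Y i.+1); first exact: mY.
by apply: funext => w /=; rewrite tnth_mktuple.
Qed.

Lemma measurable_Tstat (f : forall t : nat, nat -> t.-tuple X -> bool) t g :
  measurable_fun setT (f t g) -> measurable [set w | Tstat f Y t g w].
Proof.
move=> mf; rewrite (_ : [set w | _] = (f t g \o obs Y t) @^-1` [set true]).
  by rewrite -[_ @^-1` _]setTI; apply: (measurableT_comp mf (@measurable_obs t)).
by apply/seteqP; split => w /=; rewrite /Tstat => ->.
Qed.

End statistics.

Section first_alarm.
Context {R : realType} {d : measure_display} {Omega : measurableType d}.
Variable T : nat -> nat -> Omega -> bool.
Hypothesis mT : forall t g, (2 <= t)%N -> (1 <= g <= t.-1)%N ->
  measurable [set w | T t g w].

Definition alarm (t : nat) : set Omega := [set w | (2 <= t)%N /\ has (T t ^~ w) (grid t)].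

Lemma tauhatE w : tauhat (R:=R) T w = ereal_inf [set (t%:R)%:E | t in alarm^~ w].
Proof.
congr (ereal_inf (image _ _)); apply/seteqP; split => t /=; rewrite bigmax_nat_bool.
  by case=> t2 h; split => //; move: h; case: has.
by case=> t2 ->.
Qed.

Lemma measurable_alarm t : measurable (alarm t).
Proof.
case: (leqP 2 t) => t2.
  rewrite (_ : alarm t = [set w | has (T t ^~ w) (grid t)]).
    by apply: measurable_has => g /(mem_grid_bounds t2); exact: mT.
  by apply/seteqP; split => w /=; [case | split].
by rewrite (_ : alarm t = set0) //; apply/seteqP; split => w // [] /=; lia.
Qed.

Lemma tauhat_le_alarm t w : alarm t w -> (tauhat (R:=R) T w <= (t%:R)%:E)%E.
Proof. by move=> ht; rewrite tauhatE; apply: ereal_inf_lbound; exists t. Qed.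

Lemma tauhat_lt_pinfty : [set w | (tauhat (R:=R) T w < +oo)%E] = \bigcup_t alarm t.
Proof.
apply/seteqP; split => w /=; last first.
  by case=> t _ ht; apply: le_lt_trans (tauhat_le_alarm ht) (ltry _).
move=> fin; suff [t ht] : exists t, alarm t w by exists t.
move: fin; apply: contraPP => /forallNP noalarm; rewrite tauhatE.
rewrite (_ : [set _ | t in _] = set0) ?ereal_inf0 ?ltxx //.
by apply/seteqP; split => // x [t ht _]; exact: (noalarm t).
Qed.

Lemma measurable_tauhat_le N : measurable [set w | (tauhat (R:=R) T w <= (N%:R)%:E)%E].
Proof.
rewrite (_ : [set w | _] = \bigcup_(n in [set n | (n <= N)%N]) alarm n).
  by apply: bigcup_measurable => n _; exact: measurable_alarm.
apply/seteqP; split => w /=; last first.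
  by case=> n nN hn; apply: le_trans (tauhat_le_alarm hn) _; rewrite lee_fin ler_nat.
move=> early; suff [n [nN hn]] : exists n, (n <= N)%N /\ alarm n w by exists n.
move: early; apply: contraPP => /forallNP late; apply/negP; rewrite -ltNge tauhatE.
apply: (@lt_le_trans _ _ ((N.+1)%:R)%:E); first by rewrite lte_fin ltr_nat.
apply: le_ereal_inf_tmp => _ [n hn <-]; rewrite lee_fin ler_nat.
by case: (leqP n N) => // nN; case: (late n).
Qed.

Lemma measure_stat_le_tauhat (mu : {measure set Omega -> \bar R}) t g :
  (2 <= t)%N -> g \in grid t ->
  (mu [set w | T t g w] <= mu [set w | (tauhat (R:=R) T w <= (t%:R)%:E)%E])%E.
Proof.
move=> t2 gt; apply: le_measure; rewrite ?inE.
- by apply: mT => //; exact: mem_grid_bounds t2 gt.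
- exact: measurable_tauhat_le.
- by move=> w /= hg; apply: tauhat_le_alarm; split => //; apply/hasP; exists g.
Qed.

Section false_alarm.
Variables (mu : {measure set Omega -> \bar R}) (delta : R).
Hypothesis delta_ge0 : 0 <= delta.
Hypothesis muT : forall t g, (2 <= t)%N -> (1 <= g <= t.-1)%N ->
  (mu [set w | T t g w] <= (delta / (3 * t%:R ^+ 2 * ln t%:R))%:E)%E.

Lemma measure_alarm_le t : (mu (alarm t) <= (delta * alarm_budget R t)%:E)%E.
Proof.
case: (leqP 2 t) => t2; last first.
  rewrite (_ : alarm t = set0) ?measure0; last by apply/seteqP; split => w // [] /=; lia.
  by rewrite /alarm_budget leqNgt t2 mulr0.
rewrite (_ : alarm t = [set w | has (T t ^~ w) (grid t)]); last first.
  by apply/seteqP; split => w /=; [case | split].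
have mA g : g \in grid t -> measurable [set w | T t g w].
  by move/(mem_grid_bounds t2); exact: mT.
apply: le_trans (measure_has_le mA (fun g gt => muT t2 (mem_grid_bounds t2 gt))) _.
by rewrite lee_fin -[_ *+ size _]mulr_natl; exact: grid_level_le_budget.
Qed.

Lemma false_alarm_le : (mu [set w | (tauhat (R:=R) T w < +oo)%E] <= delta%:E)%E.
Proof.
rewrite tauhat_lt_pinfty.
apply: le_trans (measure_sigma_subadditive mu measurable_alarm
  (bigcupT_measurable _ measurable_alarm) (@subset_refl _ _)) _.
apply: lime_le; first by apply: is_cvg_nneseries => n _ _; exact: measure_ge0.
apply: nearW => N.
apply: (@le_trans _ _ (\sum_(0 <= t < N) (delta * alarm_budget R t)%:E)%E).
  by apply: lee_sum => t _; exact: measure_alarm_le.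
rewrite sumEFin lee_fin -mulr_sumr big_mkord.
by apply: le_trans (ler_wpM2l delta_ge0 (sum_alarm_budget_le R N)) _; apply: ler_piMr => //; lra.
Qed.

End false_alarm.
End first_alarm.

Lemma ceil_ratio_nat (R : archiRealFieldType) (a b : R) n : 0 < a -> a <= n%:R * b ->
  exists m : nat, [/\ Num.ceil (a / b) = m%:Z, (0 < m)%N, (m <= n)%N & a <= m%:R * b].
Proof.
move=> a0 ab.
have b0 : 0 < b.
  by rewrite ltNge; apply/negP => b0; move: (mulr_ge0_le0 (ler0n R n) b0); lra.
have c0 : 0 < a / b by rewrite divr_gt0.
have := ceil_gt0 (a / b); rewrite c0 => /ltW/gez0_abs.
set m := `|Num.ceil (a / b)|%N => cm.
exists m; split => //.
- by rewrite -ltz_nat cm ceil_gt0.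
- by rewrite -lez_nat cm ceil_le_int ler_pdivrMr.
- by rewrite -ler_pdivrMr // -[m%:R]/(m%:Z%:~R) cm ceil_ge.
Qed.

Theorem proposition3 (R : realType) (p : nat) (d : measure_display)
  (Omega : measurableType d)
  (P1 P2 : probability (p.-tuple R) R) (Y : nat -> Omega -> p.-tuple R)
  (Pinf : probability Omega R) (P : nat -> probability Omega R)
  (f : forall t : nat, nat -> t.-tuple (p.-tuple R) -> bool)
  (delta rho : R) (r : nat -> R -> R) :
  0 < delta < 1 ->
  changepoint_model P1 P2 Y Pinf None ->
  (forall tau, (0 < tau)%N -> changepoint_model P1 P2 Y (P tau) (Some tau)) ->
  (forall t g, (2 <= t)%N -> (1 <= g <= t.-1)%N -> measurable_fun setT (f t g)) ->
  (* (A) *)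
  (forall t g, (2 <= t)%N -> (1 <= g <= t.-1)%N ->
     (Pinf [set w | Tstat f Y t g w] <= (delta / (3 * t%:R ^+ 2 * ln t%:R))%:E)%E) ->
  (* (B) *)
  0 <= rho ->
  (forall t, 0 < r t delta) ->
  (forall t1 t2, (t1 <= t2)%N -> r t1 delta <= r t2 delta) ->
  (forall tau t, (0 < tau)%N -> (tau < t <= 2 * tau)%N ->
     r t delta <= (t - tau)%N%:R * rho ->
     forall g : nat, (t - tau)%N%:R / 2 <= (g%:R : R) -> (g <= t - tau)%N ->
       ((1 - delta)%:E <= P tau [set w | Tstat f Y t g w])%E) ->
  (Pinf [set w | tauhat (R:=R) (Tstat f Y) w < +oo] <= delta%:E)%E /\
  (forall tau : nat, (0 < tau)%N -> r (2 * tau)%N delta <= tau%:R * rho ->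
     ((1 - delta)%:E <=
      P tau [set w | tauhat (R:=R) (Tstat f Y) w <=
                     (tau%:R + (Num.ceil (r (2 * tau)%N delta / rho))%:~R)%:E])%E).
Proof.
move=> /andP[delta0 _] [mY _ _] _ mf HA _ r0 r_mono HB.
have mT t g : (2 <= t)%N -> (1 <= g <= t.-1)%N -> measurable [set w | Tstat f Y t g w].
  by move=> t2 hg; exact (measurable_Tstat mY (mf _ _ t2 hg)).
split; first exact: false_alarm_le (ltW delta0) HA.
move=> tau tau0 hr.
have [m [-> m0 m_tau hm]] := ceil_ratio_nat (r0 _) hr.
have [g gt /andP[mg gm]] := @grid_half_interval (tau + m) m m0 ltac:(lia).
rewrite -pmulrn -natrD.
apply: le_trans (measure_stat_le_tauhat mT _ _ gt); last lia.
have e : (tau + m - tau = m)%N by rewrite addKn.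
apply: HB => //; rewrite ?e //; first lia.
- by apply: le_trans hm; apply: r_mono; lia.
- by rewrite ler_pdivrMr // -natrM ler_nat mulnC.
Qed.
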